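(* Let $\omega$ be a rectilinearly-convex obstacle that does not have a diagonal. If $\omega$ has a cross $X$, then $X$ is a minimum skeleton for $\omega$.
   Context: An obstacle $\omega$ is a simple polygon in $\mathbb{R}^2$ (a closed, bounded polygonal region without holes whose boundary does not intersect itself), assumed in general position (no three of its vertices are collinear); vertices and edges of $\omega$ are those of its boundary. $\omega$ is rectilinear if each edge is horizontal or vertical, and a rectilinear obstacle is rectilinearly-convex if any two points of $\omega$ can be joined by a shortest rectilinear path (made of horizontal and vertical segments, of minimum $\ell_1$ length) contained in $\omega$. A corner point of a rectilinear path is a point where a horizontal and a vertical segment of the path meet. A set $S$ of closed line segments is inside $\omega$ if the union of its elements is contained in $\omega$. Such an $S$ is a skeleton for $\omega$ if for every pair of points $p,q$ not in the interior of $\omega$ such that every shortest rectilinear path between $p$ and $q$ with at most one corner point meets the interior of $\omega$, each such path intersects some element of $S$; a minimum skeleton is one with the fewest segments. $B(\omega)$ is the smallest closed axis-parallel rectangle containing $\omega$; the extreme edges are the edges of $\omega$ lying on the boundary of $B(\omega)$ (exactly four: left, right, bottom, top); an extreme corner is a vertex of $\omega$ that is a common endpoint of two extreme edges. A diagonal of $\omega$ is a line segment contained in $\omega$ joining two diagonally opposite extreme corners. A cross of $\omega$ is a pair $\{s_H,s_V\}$ of line segments contained in $\omega$, where $s_H$ has one endpoint on each of the two horizontal extreme edges and $s_V$ has one endpoint on each of the two vertical extreme edges. *)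

From HB Require Import structures.
From mathcomp Require Import all_boot all_order all_algebra.
From mathcomp Require Import reals.
Set Implicit Arguments. Unset Strict Implicit. Unset Printing Implicit Defensive.
Import Order.TTheory GRing.Theory Num.Theory.
Local Open Scope ring_scope.

Section Plane.
Variable R : realType.

Definition pt := (R * R)%type.
Definition region := pt -> Prop.

Definition l1 (p q : pt) : R := `|p.1 - q.1| + `|p.2 - q.2|.

Definition seg (a b : pt) : region := fun x =>
  exists t : R, 0 <= t <= 1 /\
    x = ((1 - t) * a.1 + t * b.1, (1 - t) * a.2 + t * b.2).

Definition ball (p : pt) (e : R) : region := fun q =>
  (q.1 - p.1) ^+ 2 + (q.2 - p.2) ^+ 2 < e ^+ 2.

Definition interior (w : region) : region := fun p =>
  exists2 e : R, 0 < e & forall q, ball p e q -> w q.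
Definition boundary (w : region) : region := fun p =>
  forall e : R, 0 < e ->
    (exists q, ball p e q /\ w q) /\ (exists q, ball p e q /\ ~ w q).
Definition closed (w : region) : Prop :=
  forall p, (forall e : R, 0 < e -> exists q, ball p e q /\ w q) -> w p.
Definition bounded (w : region) : Prop :=
  exists M : R, forall p, w p -> `|p.1| <= M /\ `|p.2| <= M.

Definition vtx (vs : seq pt) (i : nat) : pt := nth (0, 0) vs (i %% size vs).
Definition edge (vs : seq pt) (i : nat) : region := seg (vtx vs i) (vtx vs i.+1).
Definition on_polygon (vs : seq pt) : region := fun x =>
  exists2 i, (i < size vs)%N & edge vs i x.

Definition simple_polygon (vs : seq pt) : Prop :=
  (3 <= size vs)%N /\
  (forall i j, (i < size vs)%N -> (j < size vs)%N -> i <> j -> vtx vs i <> vtx vs j) /\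
  (forall i j x, (i < size vs)%N -> (j < size vs)%N -> i <> j ->
     edge vs i x -> edge vs j x ->
     (j = (i.+1 %% size vs)%N /\ x = vtx vs j) \/
     (i = (j.+1 %% size vs)%N /\ x = vtx vs i)).

Definition collinear (a b c : pt) : Prop :=
  (b.1 - a.1) * (c.2 - a.2) - (b.2 - a.2) * (c.1 - a.1) = 0.

Definition general_position (vs : seq pt) : Prop :=
  forall i j k, (i < size vs)%N -> (j < size vs)%N -> (k < size vs)%N ->
    i <> j -> j <> k -> i <> k -> ~ collinear (vtx vs i) (vtx vs j) (vtx vs k).

(* An obstacle: the closed bounded region w (with nonempty interior)
   whose topological boundary is the simple polygon with vertices vs
   in general position; i.e. w is the closed region enclosed by vs. *)
Definition obstacle (w : region) (vs : seq pt) : Prop :=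
  simple_polygon vs /\ general_position vs /\
  closed w /\ bounded w /\ (exists p, interior w p) /\
  (forall p, boundary w p <-> on_polygon vs p).

Definition rectilinear (vs : seq pt) : Prop :=
  forall i, (i < size vs)%N ->
    (vtx vs i).1 = (vtx vs i.+1).1 \/ (vtx vs i).2 = (vtx vs i.+1).2.

(* ---- rectilinear paths: start point p followed by the list ps of
   successive breakpoints; each piece is horizontal or vertical ---- *)
Fixpoint axis_chain (p : pt) (ps : seq pt) : Prop :=
  match ps with
  | [::] => True
  | x :: t => (p.1 = x.1 \/ p.2 = x.2) /\ axis_chain x t
  end.
Fixpoint plen (p : pt) (ps : seq pt) : R :=
  match ps with
  | [::] => 0
  | x :: t => l1 p x + plen x t
  end.
Fixpoint ptrace (p : pt) (ps : seq pt) : region :=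
  match ps with
  | [::] => fun x => x = p
  | y :: t => fun x => seg p y x \/ ptrace y t x
  end.

Definition shortest_rpath (p : pt) (ps : seq pt) : Prop :=
  axis_chain p ps /\
  forall ps', axis_chain p ps' -> last p ps' = last p ps -> plen p ps <= plen p ps'.

Definition rect_convex (w : region) : Prop :=
  forall a b, w a -> w b -> exists ps,
    last a ps = b /\ shortest_rpath a ps /\ (forall x, ptrace a ps x -> w x).

(* shortest rectilinear path from p to q with at most one corner point:
   two axis-parallel pieces p -> c -> q (possibly degenerate) *)
Definition one_corner_path (p q c : pt) : Prop := shortest_rpath p [:: c; q].
Definition oc_trace (p q c : pt) : region := ptrace p [:: c; q].

Definition inside (w : region) (S : seq (pt * pt)) : Prop :=
  forall s, s \in S -> forall x, seg s.1 s.2 x -> w x.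

Definition skeleton (w : region) (S : seq (pt * pt)) : Prop :=
  (forall s, s \in S -> s.1 <> s.2) /\ inside w S /\
  forall p q, ~ interior w p -> ~ interior w q ->
    (forall c, one_corner_path p q c ->
       exists x, oc_trace p q c x /\ interior w x) ->
    forall c, one_corner_path p q c ->
      exists s, s \in S /\ exists x, oc_trace p q c x /\ seg s.1 s.2 x.

Definition min_skeleton (w : region) (S : seq (pt * pt)) : Prop :=
  skeleton w S /\ forall S', skeleton w S' -> (size S <= size S')%N.

Definition min_x (w : region) (p : pt) := forall q, w q -> p.1 <= q.1.
Definition max_x (w : region) (p : pt) := forall q, w q -> q.1 <= p.1.
Definition min_y (w : region) (p : pt) := forall q, w q -> p.2 <= q.2.
Definition max_y (w : region) (p : pt) := forall q, w q -> q.2 <= p.2.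

Definition side_edge (P : pt -> Prop) (vs : seq pt) (i : nat) : Prop :=
  (i < size vs)%N /\ P (vtx vs i) /\ P (vtx vs i.+1).
Definition left_edge w vs i := side_edge (min_x w) vs i.
Definition right_edge w vs i := side_edge (max_x w) vs i.
Definition bottom_edge w vs i := side_edge (min_y w) vs i.
Definition top_edge w vs i := side_edge (max_y w) vs i.

Definition endpoint_of (vs : seq pt) (i : nat) (a : pt) : Prop :=
  a = vtx vs i \/ a = vtx vs i.+1.

Definition corner_of (E1 E2 : nat -> Prop) (vs : seq pt) (a : pt) : Prop :=
  (exists i, E1 i /\ endpoint_of vs i a) /\ (exists j, E2 j /\ endpoint_of vs j a).

Definition has_diagonal (w : region) (vs : seq pt) : Prop :=
  exists a b,
    ((corner_of (bottom_edge w vs) (left_edge w vs) vs a /\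
      corner_of (top_edge w vs) (right_edge w vs) vs b) \/
     (corner_of (top_edge w vs) (left_edge w vs) vs a /\
      corner_of (bottom_edge w vs) (right_edge w vs) vs b)) /\
    (forall x, seg a b x -> w x).

Definition joins (E1 E2 : nat -> Prop) (vs : seq pt) (s : pt * pt) : Prop :=
  exists i j, E1 i /\ E2 j /\
    ((edge vs i s.1 /\ edge vs j s.2) \/ (edge vs i s.2 /\ edge vs j s.1)).

Definition is_cross (w : region) (vs : seq pt) (sH sV : pt * pt) : Prop :=
  (forall x, seg sH.1 sH.2 x -> w x) /\ (forall x, seg sV.1 sV.2 x -> w x) /\
  joins (bottom_edge w vs) (top_edge w vs) vs sH /\
  joins (left_edge w vs) (right_edge w vs) vs sV.

End Plane.

(* Rectilinear convexity makes w convex along every horizontal and every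
   vertical line.  Let p -> c -> q be an L-shaped path between non-interior
   points that meets the interior but misses the cross AB u CD.  Moving from an
   interior point horizontally towards AB, or vertically towards CD, stays in
   the interior; hence c is interior, p lies beyond c from AB and q beyond c
   from CD.  The other L-path p -> (p.1, q.2) -> q also meets the interior, and
   by the intermediate value theorem this forces a leg of the first path across
   AB or CD.  Conversely a skeleton meets every
   horizontal and every vertical line through an interior point, and interior
   points approach all four sides of the bounding box, so a skeleton with a
   single segment would join two opposite extreme corners: a diagonal. *)

From Pilot Require Import Defs.
From mathcomp Require Import all_boot all_order all_algebra.
From mathcomp Require Import reals.
From mathcomp Require Import lra ring zify.
From Stdlib Require Import Classical_Prop.
Set Implicit Arguments. Unset Strict Implicit. Unset Printing Implicit Defensive.
Import Order.TTheory GRing.Theory Num.Theory.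
Local Open Scope ring_scope.

Section Between.
Variable R : realFieldType.
Implicit Types a b x y : R.

Definition between a x b := (a <= x <= b) \/ (b <= x <= a).

Lemma between_sym a x b : between a x b -> between b x a.
Proof. by case=> h; [right | left]. Qed.

Lemma between_l a b : between a a b.
Proof. by case: (lerP a b) => h; [left | right]; apply/andP; split; lra. Qed.

Lemma betweenP a x b :
  between a x b <-> exists t, 0 <= t <= 1 /\ x = (1 - t) * a + t * b.
Proof.
split=> [hx | [t [/andP[t0 t1] ->]]]; last first.
  by case: (lerP a b) => h; [left | right]; apply/andP; split; nra.
have [eab | nab] := eqVneq a b.
  exists 0; rewrite lexx ler01 -eab; split=> //.
  by rewrite -eab in hx; case: hx => /andP[? ?]; lra.
have dab : b - a != 0 by rewrite subr_eq0 eq_sym.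
exists ((x - a) / (b - a)); split; last by field.
case: hx => /andP[h1 h2].
- have hp : 0 < b - a by rewrite lt_neqAle eq_sym dab /=; lra.
  apply/andP; split; first by apply: divr_ge0; lra.
  by rewrite ler_pdivrMr // mul1r; lra.
- have hn : b - a < 0 by rewrite lt_neqAle dab /=; lra.
  by rewrite ler_ndivrMr // mul1r ler_ndivlMr // mul0r; apply/andP; split; lra.
Qed.

Lemma between_split a y b x :
  between a y b -> between a x b -> between a x y \/ between y x b.
Proof.
rewrite /between; case: (lerP x y) => ?; do 2 case=> /andP[? ?];
  by (left + right); (left + right); apply/andP; split; lra.
Qed.

Lemma between_dist a y b :
  between a y b <-> `|a - y| + `|y - b| <= `|a - b|.
Proof.
rewrite /between; case: (ger0P (a - y)) => ?; case: (ger0P (y - b)) => ?;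
  case: (ger0P (a - b)) => ?; split=> [[] /andP[? ?] | ?]; try lra;
  by (left + right); apply/andP; split; lra.
Qed.

Lemma pos_lower_bound2 a b : 0 < a -> 0 < b -> exists2 e, 0 < e & e <= a /\ e <= b.
Proof. by case: (lerP a b) => h ha hb; [exists a | exists b]; rewrite // lexx; lra. Qed.

Lemma between_approaching_end a b y0 :
  (y0 <= a /\ y0 <= b) \/ (a <= y0 /\ b <= y0) ->
  (forall e, 0 < e -> exists2 y, between a y b & `|y - y0| < e) -> a = y0 \/ b = y0.
Proof.
move=> hside hnear; have [ea | na] := eqVneq a y0; first by left.
have [eb | nb] := eqVneq b y0; first by right.
have ha : 0 < `|a - y0| by rewrite normr_gt0 subr_eq0.
have hb : 0 < `|b - y0| by rewrite normr_gt0 subr_eq0.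
have [e he [hea heb]] := pos_lower_bound2 ha hb.
have [y hy hye] := hnear e he.
have := ler_norm (y - y0); have := ler_norm (y0 - y); rewrite distrC.
case: hside => -[? ?].
- by rewrite !ger0_norm ?subr_ge0 // in hea heb; case: hy => /andP[? ?]; lra.
- by rewrite !ler0_norm ?subr_le0 // in hea heb; case: hy => /andP[? ?]; lra.
Qed.

Lemma between_extremal a x b :
  between a x b -> (x <= a /\ x <= b) \/ (a <= x /\ b <= x) -> x = a \/ x = b.
Proof. by case=> /andP[? ?] [] [? ?]; [left | right | right | left]; lra. Qed.

Lemma between_outside a z b h : between a z b -> ~ between a h b ->
  (between z a h /\ between h a b) \/ (between z b h /\ between h b a).
Proof.
rewrite /between => hz hn; case: (ltrP h a) => ?; case: (ltrP h b) => ?;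
  try by exfalso; apply: hn; (left + right); apply/andP; split; lra.
all: by case: hz => /andP[? ?]; (left + right); split; (left + right);
  apply/andP; split; lra.
Qed.

Lemma between_same_side h0 x p0 z h1 :
  between h0 x p0 -> between p0 z x -> ~ between z x h1 -> between h0 x h1.
Proof.
rewrite /between => + + hn; do 2 case=> /andP[? ?];
  case: (lerP h1 x) => ?; try by exfalso; apply: hn; (left + right); apply/andP; split; lra.
all: by (left + right); apply/andP; split; lra.
Qed.

End Between.

Section Segments.
Variable R : realType.
Implicit Types (a b c p q x : pt R) (w : region R).

Definition sw (p : pt R) : pt R := (p.2, p.1).

Lemma swK : involutive sw. Proof. by case. Qed.

Lemma seg_sw a b x : seg (sw a) (sw b) (sw x) <-> seg a b x.
Proof. by case: x => x1 x2; split=> -[t [ht [-> ->]]]; exists t. Qed.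

Lemma pt_eq a b : a.1 = b.1 -> a.2 = b.2 -> a = b.
Proof. by case: a b => ? ? [? ?] /= -> ->. Qed.

Lemma seg_sym a b x : seg a b x -> seg b a x.
Proof.
case=> t [/andP[t0 t1] ->]; exists (1 - t).
by split; [apply/andP; split; lra | congr pair; ring].
Qed.

Lemma seg_start a b : seg a b a.
Proof. by exists 0; rewrite lexx ler01; case: a => ? ? /=; split=> //; congr pair; ring. Qed.

Lemma seg_end a b : seg a b b.
Proof. by exists 1; rewrite lexx ler01; case: b => ? ? /=; split=> //; congr pair; ring. Qed.

Lemma seg_same a x : seg a a x -> x = a.
Proof. by case=> t [_ ->]; case: a => ? ? /=; congr pair; ring. Qed.

Lemma seg_between a b x : seg a b x -> between a.1 x.1 b.1 /\ between a.2 x.2 b.2.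
Proof. by case=> t [ht ->]; split; apply/betweenP; exists t. Qed.

Lemma seg_hor a b x : a.2 = b.2 ->
  seg a b x <-> x.2 = a.2 /\ between a.1 x.1 b.1.
Proof.
move=> e; split=> [[t [ht ->]] | [ex /betweenP[t [ht ex1]]]].
  rewrite -e; split; last by apply/betweenP; exists t.
  by rewrite /=; ring.
by exists t; split=> //; rewrite [x]surjective_pairing ex1 ex -e; congr pair; ring.
Qed.

Lemma seg_ver a b x : a.1 = b.1 ->
  seg a b x <-> x.1 = a.1 /\ between a.2 x.2 b.2.
Proof. by move=> e; rewrite -seg_sw seg_hor. Qed.

End Segments.

Arguments sw {R} p.
Arguments swK {R}.

Section Paths.
Variable R : realType.
Implicit Types (a b c p q x : pt R) (w : region R) (ps : seq (pt R)).

Lemma l1_triangle a b c : l1 a c <= l1 a b + l1 b c.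
Proof. by rewrite /l1; have := ler_distD b.1 a.1 c.1; have := ler_distD b.2 a.2 c.2; lra. Qed.

Lemma l1_last_le_plen p ps : l1 p (last p ps) <= plen p ps.
Proof.
elim: ps p => [|y t IH] p /=; first by rewrite /l1 !subrr normr0 addr0.
by apply: le_trans (l1_triangle p y _) _; rewrite lerD2l.
Qed.

Lemma hseg_sub_short_trace a ps : a.2 = (last a ps).2 ->
  plen a ps <= l1 a (last a ps) -> forall x, seg a (last a ps) x -> ptrace a ps x.
Proof.
elim: ps a => [|y t IH] a /=; first by move=> _ _ x /seg_same.
set b := last y t => eab hlen x hx.
have := l1_last_le_plen y t; rewrite -/b => hyb.
have := ler_distD y.1 a.1 b.1; have := normr_ge0 (a.2 - y.2); have := normr_ge0 (y.2 - b.2).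
have hab2 : `|a.2 - b.2| = 0 by rewrite eab subrr normr0.
move: hlen; rewrite /l1 hab2 addr0 => hlen; move: hyb; rewrite /l1 => hyb h1 h2 h3.
have hy2 : `|a.2 - y.2| = 0 by lra.
have ey : y.2 = a.2 by apply/esym/eqP; rewrite -subr_eq0 -normr_eq0 hy2.
have hyab : between a.1 y.1 b.1 by apply/between_dist; lra.
move/(seg_hor _ eab): hx => [ex hxab].
case: (between_split hyab hxab) => hx; [left | right].
  by apply/seg_hor => //; split.
apply: IH; first by rewrite -/b ey.
  by rewrite -/b /l1; lra.
by apply/(seg_hor _ (etrans ey eab)); rewrite ex ey.
Qed.

Lemma axis_chain_sw p ps : axis_chain (sw p) (map sw ps) <-> axis_chain p ps.
Proof. by elim: ps p => [|y t IH] p //=; rewrite IH; split=> -[h ?]; split=> //; case: h; auto. Qed.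

Lemma plen_sw p ps : plen (sw p) (map sw ps) = plen p ps.
Proof. by elim: ps p => [|y t IH] p //=; rewrite IH /l1 /= [`|p.2 - _| + _]addrC. Qed.

Lemma ptrace_sw p ps x : ptrace (sw p) (map sw ps) (sw x) <-> ptrace p ps x.
Proof.
elim: ps p => [|y t IH] p /=; last by rewrite IH seg_sw.
by split=> [e | ->]; [rewrite -[x]swK e swK |].
Qed.

Lemma shortest_rpath_sw p ps : shortest_rpath p ps -> shortest_rpath (sw p) (map sw ps).
Proof.
case=> hch hmin; split; first exact/axis_chain_sw.
move=> ps' hch' hl; rewrite plen_sw -(mapK swK ps') -(swK p) plen_sw swK.
apply: hmin; first by rewrite -(swK p) axis_chain_sw.
by apply: (can_inj swK); rewrite -(last_map sw) (mapK swK) hl last_map.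
Qed.

Lemma rect_convex_sw w : rect_convex w -> rect_convex (w \o sw).
Proof.
move=> hc a b wa wb; have [ps [hl [hs htr]]] := hc _ _ wa wb.
exists (map sw ps); split; first by rewrite -(swK a) last_map hl swK.
split; first by rewrite -[a in shortest_rpath a]swK; exact: shortest_rpath_sw.
by move=> x; rewrite -[a]swK -[x]swK ptrace_sw /= swK => /htr.
Qed.

Definition hconvex w := forall a b x, w a -> w b -> a.2 = b.2 -> seg a b x -> w x.

Lemma rect_convex_hconvex w : rect_convex w -> hconvex w.
Proof.
move=> hc a b x wa wb eab hx; have [ps [hl [[hch hmin] htr]]] := hc _ _ wa wb.
apply/htr/hseg_sub_short_trace; rewrite hl //.
by have := hmin [:: b]; rewrite /= hl addr0; apply=> //; split=> //; right.
Qed.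

Lemma hconvex_between w a b u : hconvex w -> w a -> w b -> a.2 = b.2 ->
  u.2 = a.2 -> between a.1 u.1 b.1 -> w u.
Proof. by move=> hc wa wb eab eu hu; apply: (hc a b) => //; apply/seg_hor. Qed.

End Paths.

Section Interior.
Variable R : realType.
Implicit Types (a b p q u z : pt R) (w : region R).

Lemma ball_center p e : 0 < e -> ball p e p.
Proof. by move=> he; rewrite /ball !subrr expr2 mul0r addr0 exprn_gt0. Qed.

Lemma ball_box p e q : 0 < e -> ball p e q ->
  [/\ q.1 - p.1 < e, p.1 - q.1 < e, q.2 - p.2 < e & p.2 - q.2 < e].
Proof.
rewrite /ball !expr2 => he h.
have h1 := sqr_ge0 (q.1 - p.1); have h2 := sqr_ge0 (q.2 - p.2); rewrite !expr2 in h1 h2.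
split; nra.
Qed.

Lemma ball_sw p e q : ball (sw p) e (sw q) <-> ball p e q.
Proof. by rewrite /ball /= addrC. Qed.

Lemma interior_mem w z : interior w z -> w z.
Proof. by case=> e he; apply; exact: ball_center. Qed.

Lemma interior_sw w z : interior (w \o sw) (sw z) <-> interior w z.
Proof.
split=> -[e he h]; exists e => // q hq.
  by rewrite -(swK q); apply: h; rewrite ball_sw.
by apply: h; rewrite -[z]swK ball_sw.
Qed.

Lemma interior_strict_bounds w z (y0 y1 : R) :
  (forall q, w q -> y0 <= q.2 <= y1) -> interior w z -> y0 < z.2 < y1.
Proof.
move=> hb [e he hin]; have he2 : 0 < e / 2 by rewrite divr_gt0.
have inball d : d ^+ 2 < e ^+ 2 -> w (z.1, z.2 + d).
  by move=> hd; apply: hin; rewrite /ball /= subrr addrAC subrr add0r expr2 mul0r add0r.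
have /hb/andP[_ h1] : w (z.1, z.2 + e / 2) by apply: inball; rewrite !expr2; nra.
have /hb/andP[h2 _] : w (z.1, z.2 + - (e / 2)) by apply: inball; rewrite !expr2; nra.
by rewrite /= in h1 h2; apply/andP; split; lra.
Qed.

Lemma interior_strict_xbounds w z (x0 x1 : R) :
  (forall q, w q -> x0 <= q.1 <= x1) -> interior w z -> x0 < z.1 < x1.
Proof.
move=> hb iz; apply: (interior_strict_bounds (w := w \o sw) (z := sw z)).
  by move=> q /hb.
by rewrite interior_sw.
Qed.

End Interior.

Section Cut.
Variable R : realType.
Implicit Types (a b c p q u x z : pt R) (w : region R).

Definition xcut (A B : pt R) (y : R) : R :=
  A.1 + (B.1 - A.1) / (B.2 - A.2) * (y - A.2).

Variables (w : region R) (A B : pt R).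
Hypotheses (hconv : hconvex w) (wAB : forall x, seg A B x -> w x) (hAB : A.2 < B.2).

Lemma xcut_conv (y0 y1 t : R) :
  xcut A B ((1 - t) * y0 + t * y1) = (1 - t) * xcut A B y0 + t * xcut A B y1.
Proof. by rewrite /xcut; ring. Qed.

Lemma seg_xcut (y : R) : between A.2 y B.2 -> seg A B (xcut A B y, y).
Proof.
case/betweenP=> t [ht ->]; exists t; split=> //; congr pair.
have hd : B.2 - A.2 != 0 by rewrite subr_eq0 gt_eqF.
by rewrite xcut_conv /xcut; field.
Qed.


(* u lies horizontally between a translate of itself inside the ball around z
   and the point of AB at its own height; both are in w. *)
Lemma interior_toward_cut z e0 : interior w z -> A.2 < z.2 < B.2 -> e0.2 = z.2 ->
  between z.1 e0.1 (xcut A B z.2) -> e0.1 != xcut A B z.2 -> interior w e0.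
Proof.
move=> [e he hin] /andP[hz1 hz2] ez hbet hne.
set k := (B.1 - A.1) / (B.2 - A.2); set H := xcut A B z.2.
have hD : 0 < `|H - e0.1| by rewrite normr_gt0 subr_eq0 eq_sym.
have hk : 0 < `|k| + 1 by have := normr_ge0 k; lra.
have [e1 he1 [? e1D]] := pos_lower_bound2 he (divr_gt0 hD hk).
have [e2 he2 [? ?]] : exists2 e2, 0 < e2 & e2 <= z.2 - A.2 /\ e2 <= B.2 - z.2.
  by apply: pos_lower_bound2; lra.
have [eps heps [epse1 ?]] := pos_lower_bound2 he1 he2.
exists eps => // u hu; have [? ? ? ?] := ball_box heps hu.
have w_shift : w (u.1 + (z.1 - e0.1), u.2).
  apply: hin; move: hu; rewrite /ball /= ez !expr2 => hu.
  have -> : u.1 + (z.1 - e0.1) - z.1 = u.1 - e0.1 by ring.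
  nra.
have w_cut : w (xcut A B u.2, u.2).
  by apply/wAB/seg_xcut => //; left; apply/andP; split; lra.
apply: (hconvex_between hconv w_shift w_cut) => //=.
have -> : xcut A B u.2 = H + k * (u.2 - z.2) by rewrite /H /xcut /k; ring.
have : `|k * (u.2 - z.2)| <= `|k| * eps.
  by rewrite normrM ler_wpM2l // ler_norml; apply/andP; split; lra.
rewrite ler_norml => /andP[? ?].
have : eps * (`|k| + 1) <= `|H - e0.1|.
  by rewrite -ler_pdivlMr //; apply: le_trans e1D.
case: hbet => /andP[? ?].
- by rewrite (ger0_norm (x := H - _)) /H; [left; apply/andP; split; lra | lra].
- by rewrite (ler0_norm (x := H - _)) /H; [right; apply/andP; split; lra | lra].
Qed.

Hypothesis hbd : forall q, w q -> A.2 <= q.2 <= B.2.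

Lemma hseg_interior_end a b z : a.2 = b.2 -> seg a b z -> interior w z ->
  (forall x, seg a b x -> ~ seg A B x) -> ~ interior w a ->
  interior w b /\ between (xcut A B b.2) b.1 a.1.
Proof.
move=> eab hz iz avoid na; have /andP[hz1 hz2] := interior_strict_bounds hbd iz.
move/(seg_hor _ eab): hz => [ez hzab].
have zAB : A.2 < z.2 < B.2 by apply/andP.
have notX : ~ between a.1 (xcut A B z.2) b.1.
  move=> hX; apply: (avoid (xcut A B z.2, z.2)); first exact/seg_hor.
  by apply: seg_xcut => //; left; apply/andP; split; lra.
case: (between_outside hzab notX) => [[hza _] | [hzb hXb]].
  case: na; apply: (interior_toward_cut iz zAB (esym ez) hza).
  by apply/eqP => haX; apply: notX; rewrite -haX; apply: between_l.
have ebz : b.2 = z.2 by rewrite ez eab.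
split; last by rewrite ebz.
apply: (interior_toward_cut iz zAB ebz hzb).
by apply/eqP => hbX; apply: notX; rewrite -hbX; apply/between_sym/between_l.
Qed.

Lemma vseg_meets_cut a b : a.1 = b.1 -> A.2 <= a.2 <= B.2 -> A.2 <= b.2 <= B.2 ->
  between (xcut A B a.2) a.1 (xcut A B b.2) -> exists x, seg a b x /\ seg A B x.
Proof.
move=> eab /andP[? ?] /andP[? ?] /betweenP[t [/andP[t0 t1] ha1]].
exists ((1 - t) * a.1 + t * b.1, (1 - t) * a.2 + t * b.2); split.
  by exists t; rewrite t0 t1.
have -> : (1 - t) * a.1 + t * b.1 = xcut A B ((1 - t) * a.2 + t * b.2).
  by rewrite xcut_conv -ha1 -eab; ring.
by apply: seg_xcut => //; left; apply/andP; split; nra.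
Qed.

End Cut.

Section Cross.
Variable R : realType.
Implicit Types (a b c p q u x z : pt R) (w : region R).

(* A cross {AB, CD} of a region that is convex along horizontal and vertical
   lines; vertical convexity is stated as horizontal convexity of [w \o sw]. *)
Record cross_config w (A B C D : pt R) : Prop := CrossConfig {
  cc_hconvex : hconvex w;
  cc_vconvex : hconvex (w \o sw);
  cc_AB : forall x, seg A B x -> w x;
  cc_CD : forall x, seg C D x -> w x;
  cc_AB_lt : A.2 < B.2;
  cc_CD_lt : C.1 < D.1;
  cc_ybounds : forall q, w q -> A.2 <= q.2 <= B.2;
  cc_xbounds : forall q, w q -> C.1 <= q.1 <= D.1 }.

Lemma hconvex_swK w : hconvex w -> hconvex (w \o sw \o sw).
Proof. by move=> hc a b x; rewrite /= !swK; apply: hc. Qed.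

Lemma seg_sw_sub w a b : (forall x, seg a b x -> w x) ->
  forall x, seg (sw a) (sw b) x -> (w \o sw) x.
Proof. by move=> hab x; rewrite -[x]swK seg_sw /= swK => /hab. Qed.

Lemma cross_config_sw w A B C D :
  cross_config w A B C D -> cross_config (w \o sw) (sw C) (sw D) (sw A) (sw B).
Proof.
case=> hh hv hAB hCD ? ? hy hx; split=> //; last by move=> q /hy.
- exact: hconvex_swK.
- exact: seg_sw_sub.
- exact: seg_sw_sub.
- by move=> q /hx.
Qed.

(* the ordinate of the line CD at abscissa x *)
Definition ycut (C D : pt R) (x : R) : R := xcut (sw C) (sw D) x.

Definition lpath (p q : pt R) : region R :=
  fun x => seg p (q.1, p.2) x \/ seg (q.1, p.2) q x.

Variables (w : region R) (A B C D : pt R).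
Hypothesis hcc : cross_config w A B C D.

Lemma vseg_interior_end a b z : a.1 = b.1 -> seg a b z -> interior w z ->
  (forall x, seg a b x -> ~ seg C D x) -> ~ interior w a ->
  interior w b /\ between (ycut C D b.1) b.2 a.2.
Proof.
case: (cross_config_sw hcc) => hh _ hCD _ hlt _ hy _ eab hz iz avoid na.
rewrite -interior_sw; apply: (@hseg_interior_end _ _ _ _ hh hCD hlt hy (sw a) (sw b) (sw z) eab).
- by rewrite seg_sw.
- by rewrite interior_sw.
- by move=> x; rewrite -[x]swK !seg_sw; apply: avoid.
- by rewrite interior_sw.
Qed.

Lemma lpath_corner_interior p q z : ~ interior w p -> ~ interior w q ->
  (forall x, lpath p q x -> ~ seg A B x /\ ~ seg C D x) ->
  lpath p q z -> interior w z ->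
  [/\ interior w (q.1, p.2), between (xcut A B p.2) q.1 p.1
     & between (ycut C D q.1) p.2 q.2].
Proof.
case: (hcc) => hh _ hAB _ hlt _ hy _; set c := (q.1, p.2) => np nq avoid hz iz.
have avH x : seg p c x -> ~ seg A B x by move=> h; case: (avoid x (or_introl h)).
have avV x : seg q c x -> ~ seg C D x.
  by move/seg_sym=> h; case: (avoid x (or_intror h)).
case: hz => hz.
- have [ic dH] := hseg_interior_end hh hAB hlt hy (erefl : p.2 = c.2) hz iz avH np.
  by have [_ dV] := vseg_interior_end (erefl : q.1 = c.1) (seg_end q c) ic avV nq.
- have [ic dV] := vseg_interior_end (erefl : q.1 = c.1) (seg_sym hz) iz avV nq.
  by have [_ dH] := hseg_interior_end hh hAB hlt hy (erefl : p.2 = c.2) (seg_end p c) ic avH np.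
Qed.

(* An interior z would keep q from lying between z and AB, so q.1 would lie
   between the abscissae of AB at heights p.2 and q.2, and the vertical leg
   from (q.1, p.2) to q would cross AB. *)
Lemma hleg_not_interior p q z : ~ interior w q ->
  (forall x, seg (q.1, p.2) q x -> ~ seg A B x) ->
  between (xcut A B p.2) q.1 p.1 -> A.2 <= p.2 <= B.2 ->
  seg (p.1, q.2) q z -> ~ interior w z.
Proof.
case: (hcc) => hh _ hAB _ hlt _ hy _ nq avoid dH hp hz iz.
have /andP[? ?] := interior_strict_bounds hy iz.
move/(seg_hor _ (erefl : (p.1, q.2).2 = q.2)): hz => /= [ez hzb].
have hq : A.2 <= q.2 <= B.2 by apply/andP; split; lra.
have nb : ~ between z.1 q.1 (xcut A B q.2).
  move=> hb; apply: nq; rewrite -ez in hb *.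
  apply: (interior_toward_cut hh hAB hlt iz _ _ hb) => //; first by apply/andP.
  apply/eqP=> hqX; apply: (avoid q (seg_end _ q)).
  rewrite [q]surjective_pairing hqX -ez; apply: seg_xcut => //.
  by left; apply/andP; split; lra.
have [x [hx hxAB]] := vseg_meets_cut hlt (erefl : (q.1, p.2).1 = q.1) hp hq
  (between_same_side dH hzb nb).
exact: avoid x hx hxAB.
Qed.

End Cross.

(* The corner of the first L-path is interior, with p and q beyond it from AB
   and CD; the second L-path then cannot meet the interior.  Its vertical leg
   is the horizontal leg of the same configuration with the axes swapped. *)
Lemma cross_meets_lpath R (w : region R) A B C D p q :
  cross_config w A B C D -> ~ interior w p -> ~ interior w q ->
  (exists2 z, lpath p q z & interior w z) -> (exists2 z, lpath q p z & interior w z) ->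
  exists2 x, lpath p q x & seg A B x \/ seg C D x.
Proof.
move=> hcc np nq [z hz iz] [z' hz' iz']; apply: NNPP => hno.
have avoid x : lpath p q x -> ~ seg A B x /\ ~ seg C D x.
  by move=> hx; split=> h; apply: hno; exists x => //; [left | right].
have [ic dH dV] := lpath_corner_interior hcc np nq avoid hz iz.
have /andP[? ?] := interior_strict_bounds (cc_ybounds hcc) ic.
have /andP[? ?] := interior_strict_bounds (cc_ybounds (cross_config_sw hcc))
  (proj2 (interior_sw _ _) ic).
case: hz' => hz'.
- apply: (hleg_not_interior hcc nq _ dH _ (seg_sym hz') iz').
    by move=> x h; case: (avoid x (or_intror h)).
  by apply/andP; split; lra.
- apply: (hleg_not_interior (cross_config_sw hcc) (p := sw q) (q := sw p) (z := sw z')).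
  + by rewrite interior_sw.
  + move=> x; rewrite -[x]swK (seg_sw (q.1, p.2)) => /seg_sym h.
    by rewrite seg_sw; case: (avoid _ (or_introl h)).
  + exact: dV.
  + by apply/andP; split; rewrite /=; lra.
  + by rewrite (seg_sw (p.1, q.2)).
  + by rewrite interior_sw.
Qed.

Section OneCorner.
Variable R : realType.
Implicit Types (a b c p q x z : pt R) (w : region R).

Lemma oc_trace_lpath p q x : oc_trace p q (q.1, p.2) x <-> lpath p q x.
Proof.
rewrite /oc_trace /lpath /=.
by split=> [[h | [h | ->]] | [h | h]]; [left | right | right; exact: seg_end | left | right; left].
Qed.

Lemma oc_trace_lpath_rev p q x : oc_trace p q (p.1, q.2) x <-> lpath q p x.
Proof.
rewrite /oc_trace /lpath /=.
split=> [[/seg_sym h | [/seg_sym h | ->]] | [/seg_sym h | /seg_sym h]];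
  by [right | left | left; exact: seg_start | right; left].
Qed.

Lemma one_corner_path_lpath p q c :
  c = (q.1, p.2) \/ c = (p.1, q.2) -> one_corner_path p q c.
Proof.
move=> hc; split.
  by case: hc => -> /=; do !split; auto.
move=> ps' _ /= hl; apply: le_trans (l1_last_le_plen p ps'); rewrite hl.
by case: hc => -> /=; rewrite /l1 /= !subrr normr0; lra.
Qed.

Lemma lpath_aligned p q x : p.1 = q.1 \/ p.2 = q.2 -> lpath p q x <-> seg p q x.
Proof.
rewrite /lpath; case=> e.
  have -> : (q.1, p.2) = p by rewrite -e -surjective_pairing.
  by split=> [[/seg_same ->|//] | ?]; [exact: seg_start | right].
have -> : (q.1, p.2) = q by rewrite e -surjective_pairing.
by split=> [[//|/seg_same ->] | ?]; [exact: seg_end | left].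
Qed.

Lemma hseg_split p c q x : p.2 = c.2 -> c.2 = q.2 -> between p.1 c.1 q.1 ->
  seg p q x -> seg p c x \/ seg c q x.
Proof.
move=> epc ecq hc /(seg_hor _ (etrans epc ecq)) [ex hx].
by case: (between_split hc hx) => h; [left | right]; apply/seg_hor; rewrite // -epc.
Qed.

Lemma vseg_split p c q x : p.1 = c.1 -> c.1 = q.1 -> between p.2 c.2 q.2 ->
  seg p q x -> seg p c x \/ seg c q x.
Proof. by move=> epc ecq hc; rewrite -!(seg_sw _ _ x); apply: hseg_split. Qed.


Lemma one_corner_trace p q c : one_corner_path p q c ->
  (forall x, lpath p q x -> oc_trace p q c x) \/
  (forall x, lpath q p x -> oc_trace p q c x).
Proof.
case=> -[hpc [hcq _]] hmin.
have := hmin _ (proj1 (one_corner_path_lpath (or_introl erefl))) erefl.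
rewrite /= /l1 /= !subrr normr0 !addr0 => hle.
have oc_seg x : seg p c x \/ seg c q x -> oc_trace p q c x by case; [left | right; left].
case: hpc => epc; case: hcq => ecq.
- left=> x /(lpath_aligned _ (or_introl (etrans epc ecq))) hx.
  apply/oc_seg/vseg_split=> //.
  by apply/between_dist; move: hle; rewrite epc ecq subrr normr0; lra.
- by right=> x; rewrite -oc_trace_lpath_rev [c]surjective_pairing -epc ecq.
- by left=> x; rewrite -oc_trace_lpath [c]surjective_pairing -epc ecq.
- left=> x /(lpath_aligned _ (or_intror (etrans epc ecq))) hx.
  apply/oc_seg/hseg_split=> //.
  by apply/between_dist; move: hle; rewrite epc ecq subrr normr0; lra.
Qed.

Lemma skeleton_meets_seg w S p q z : skeleton w S ->
  ~ interior w p -> ~ interior w q -> p.1 = q.1 \/ p.2 = q.2 ->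
  seg p q z -> interior w z ->
  exists2 s, s \in S & exists2 x, seg s.1 s.2 x & seg p q x.
Proof.
case=> _ [_ hblock] np nq al hz iz.
have al' : q.1 = p.1 \/ q.2 = p.2 by case: al => ->; [left | right].
have [|s [hs [x [hx hxs]]]] := hblock p q np nq _ _ (one_corner_path_lpath (or_introl erefl)).
  move=> c /one_corner_trace [] htr; exists z; split=> //; apply: htr.
    exact/(lpath_aligned _ al).
  by apply/(lpath_aligned _ al')/seg_sym.
by exists s => //; exists x => //; apply/(lpath_aligned _ al)/oc_trace_lpath.
Qed.

Lemma skeleton_levels w S z : skeleton w S -> bounded w -> interior w z ->
  (exists2 s, s \in S & exists2 x, seg s.1 s.2 x & x.2 = z.2) /\
  (exists2 s, s \in S & exists2 x, seg s.1 s.2 x & x.1 = z.1).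
Proof.
move=> hS [M hM] iz; have /hM [hz1 hz2] := interior_mem iz.
set m := `|M| + 1.
have hm : M < m by rewrite /m; have := ler_norm M; lra.
have hm0 : 0 < m by rewrite /m; have := normr_ge0 M; lra.
have far p : M < `|p.1| \/ M < `|p.2| -> ~ interior w p.
  by move=> hp /interior_mem /hM [? ?]; case: hp; lra.
have farN : M < `|- m| by rewrite normrN gtr0_norm.
have farP : M < `|m| by rewrite gtr0_norm.
have inm (t : R) : `|t| <= M -> between (- m) t m.
  by rewrite ler_norml => /andP[? ?]; left; apply/andP; split; lra.
split.
- have [|s hs [x hx /seg_hor[//|ex _]]] := skeleton_meets_seg hS (far (- m, z.2) (or_introl farN))
    (far (m, z.2) (or_introl farP)) (or_intror erefl) _ iz; last by exists s => //; exists x.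
  by apply/seg_hor => //=; split=> //; apply: inm.
- have [|s hs [x hx /seg_ver[//|ex _]]] := skeleton_meets_seg hS (far (z.1, - m) (or_intror farN))
    (far (z.1, m) (or_intror farP)) (or_introl erefl) _ iz; last by exists s => //; exists x.
  by apply/seg_ver => //=; split=> //; apply: inm.
Qed.

End OneCorner.

Section Levels.
Variable R : realType.
Implicit Types (u v x z : pt R) (w : region R).

Lemma rectangle_interior w (x0 x1 y0 y1 : R) z : hconvex w ->
  (forall y, y0 <= y <= y1 -> w (x0, y) /\ w (x1, y)) ->
  x0 < z.1 < x1 -> y0 < z.2 < y1 -> interior w z.
Proof.
move=> hc hside /andP[? ?] /andP[? ?].
have [r1 hr1 [? ?]] : exists2 r, 0 < r & r <= z.1 - x0 /\ r <= x1 - z.1.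
  by apply: pos_lower_bound2; lra.
have [r2 hr2 [? ?]] : exists2 r, 0 < r & r <= z.2 - y0 /\ r <= y1 - z.2.
  by apply: pos_lower_bound2; lra.
have [r hr [? ?]] := pos_lower_bound2 hr1 hr2.
exists r => // u /(ball_box hr) [? ? ? ?].
have [wx0 wx1] : w (x0, u.2) /\ w (x1, u.2) by apply: hside; apply/andP; split; lra.
by apply: (hconvex_between hc wx0 wx1) => //=; left; apply/andP; split; lra.
Qed.

(* The two vertical segments span an open rectangle of interior points. *)
Lemma level_approached w u v u' v' : hconvex w -> u.2 = v.2 -> u.1 != v.1 ->
  u'.1 = u.1 -> v'.1 = v.1 ->
  (forall x, seg u u' x -> w x) -> (forall x, seg v v' x -> w x) ->
  (u.2 < u'.2 /\ u.2 < v'.2) \/ (u'.2 < u.2 /\ v'.2 < u.2) ->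
  forall eps, 0 < eps -> exists z, interior w z /\ `|z.2 - u.2| < eps.
Proof.
wlog huv : u v u' v' / u.1 < v.1 => [hw hc euv nuv eu ev wu wv hside|].
  case: (ltgtP u.1 v.1) => [hlt | hlt | e]; last by rewrite e eqxx in nuv.
    exact: (hw u v u' v' hlt).
  have hside' : (v.2 < v'.2 /\ v.2 < u'.2) \/ (v'.2 < v.2 /\ u'.2 < v.2).
    by rewrite -euv; case: hside => -[]; [left | right].
  by rewrite euv; apply: (hw v u v' u' hlt hc (esym euv)) => //; rewrite lt_eqF.
move=> hc euv _ eu ev wu wv hside eps heps.
suff [y0 [y1 [hy01 hrung hmid]]] : exists y0 y1, [/\ y0 < y1,
    forall y, y0 <= y <= y1 -> between u.2 y u'.2 /\ between u.2 y v'.2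
  & `|(y0 + y1) / 2 - u.2| < eps].
  exists ((u.1 + v.1) / 2, (y0 + y1) / 2); split=> //.
  apply: (rectangle_interior (x0 := u.1) (x1 := v.1) (y0 := y0) (y1 := y1) hc) => /=; last 2 first.
  - by apply/andP; split; lra.
  - by apply/andP; split; lra.
  move=> y /hrung [hu hv]; split.
    by apply: wu; apply/seg_ver.
  by apply: wv; apply/seg_ver => //; rewrite -euv.
case: hside => -[? ?].
- have [h0 h00 [? ?]] : exists2 h, 0 < h & h <= u'.2 - u.2 /\ h <= v'.2 - u.2.
    by apply: pos_lower_bound2; lra.
  have [h hh [? ?]] := pos_lower_bound2 h00 heps.
  exists u.2, (u.2 + h); split; first lra.
    by move=> y /andP[? ?]; split; left; apply/andP; split; lra.
  by rewrite ger0_norm; lra.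
- have [h0 h00 [? ?]] : exists2 h, 0 < h & h <= u.2 - u'.2 /\ h <= u.2 - v'.2.
    by apply: pos_lower_bound2; lra.
  have [h hh [? ?]] := pos_lower_bound2 h00 heps.
  exists (u.2 - h), u.2; split; first lra.
    by move=> y /andP[? ?]; split; right; apply/andP; split; lra.
  by rewrite ler0_norm; lra.
Qed.

End Levels.

Section Polygon.
Variable R : realType.
Variables (w : region R) (vs : seq (pt R)).
Hypotheses (hob : obstacle w vs) (hrect : rectilinear vs).
Local Notation n := (size vs).
Local Notation vtx := (vtx vs).

Lemma size_ge3 : (3 <= n)%N. Proof. by case: hob => -[]. Qed.

Lemma size_gt0 : (0 < n)%N. Proof. by have := size_ge3; case: n. Qed.

Lemma vtx_modn k : vtx (k %% n)%N = vtx k.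
Proof. by rewrite /Defs.vtx modn_mod. Qed.

Lemma vtx_modnS k : vtx (k %% n)%N.+1 = vtx k.+1.
Proof. by rewrite /Defs.vtx -addn1 modnDml addn1. Qed.

Lemma vtx_prevS k : vtx (k + n.-1).+1 = vtx k.
Proof. by rewrite -addnS prednK ?size_gt0 // /Defs.vtx modnDr. Qed.

Lemma vtx_prevSS k : vtx (k + n.-1).+2 = vtx k.+1.
Proof. by rewrite -(vtx_prevS k.+1) addSn. Qed.

Lemma edge_modn k : edge vs (k %% n)%N = edge vs k.
Proof. by rewrite /edge vtx_modn vtx_modnS. Qed.

Lemma polygon_mem x : on_polygon vs x -> w x.
Proof.
move=> hx; case: hob => _ [_ [hcl [_ [_ hbd]]]]; apply: hcl => e he.
by have [[q [? ?]] _] := (hbd x).2 hx e he; exists q.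
Qed.

Lemma edge_mem k x : edge vs k x -> w x.
Proof.
by move=> hx; apply: polygon_mem; exists (k %% n)%N; rewrite ?ltn_pmod ?size_gt0 ?edge_modn.
Qed.

Lemma vtx_mem k : w (vtx k).
Proof. exact: (@edge_mem k _ (seg_start _ _)). Qed.

Lemma vtx_neqS k : vtx k <> vtx k.+1.
Proof.
case: hob => -[_ [hd _]] _; have h3 := size_ge3.
rewrite -vtx_modn -[vtx k.+1]vtx_modn; apply: hd; rewrite ?ltn_pmod ?size_gt0 //.
by move/eqP; rewrite -addn1 -{1}[k]addn0 eqn_modDl !modn_small //; lia.
Qed.

Lemma edge_axis k : (vtx k).1 = (vtx k.+1).1 \/ (vtx k).2 = (vtx k.+1).2.
Proof. by rewrite -vtx_modn -vtx_modnS; apply: hrect; rewrite ltn_pmod ?size_gt0. Qed.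

Lemma edges_alternate k :
  ((vtx k).2 = (vtx k.+1).2 /\ (vtx k.+1).1 = (vtx k.+2).1) \/
  ((vtx k).1 = (vtx k.+1).1 /\ (vtx k.+1).2 = (vtx k.+2).2).
Proof.
have ncol : ~ collinear (vtx k) (vtx k.+1) (vtx k.+2).
  case: hob => _ [hgp _]; have h3 := size_ge3.
  rewrite -vtx_modn -[vtx k.+1]vtx_modn -[vtx k.+2]vtx_modn.
  have neq a b : (a < 3)%N -> (b < 3)%N -> a != b -> ((k + a) %% n <> (k + b) %% n)%N.
    by move=> ? ? ?; apply/eqP; rewrite eqn_modDl !modn_small //; lia.
  apply: hgp; rewrite ?ltn_pmod ?size_gt0 //.
  - by have := neq 0 1; rewrite addn0 addn1; apply.
  - by have := neq 1 2; rewrite addn1 addn2; apply.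
  - by have := neq 0 2; rewrite addn0 addn2; apply.
case: (edge_axis k) => e1; case: (edge_axis k.+1) => e2; [ | by right | by left | ];
  by case: ncol; rewrite /collinear -e2 -e1 subrr; ring.
Qed.

Lemma hedge_neighbours i : (vtx i).2 = (vtx i.+1).2 ->
  (vtx (i + n.-1)).1 = (vtx i).1 /\ (vtx i.+2).1 = (vtx i.+1).1.
Proof.
move=> e; split.
  case: (edges_alternate (i + n.-1)); rewrite vtx_prevS vtx_prevSS => -[// e1 e2].
  by case: (@vtx_neqS i); apply: pt_eq.
case: (edges_alternate i) => -[e1 e2] //; by case: (@vtx_neqS i); apply: pt_eq.
Qed.

Lemma vedge_neighbours i : (vtx i).1 = (vtx i.+1).1 ->
  (vtx (i + n.-1)).2 = (vtx i).2 /\ (vtx i.+2).2 = (vtx i.+1).2.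
Proof.
move=> e; split.
  case: (edges_alternate (i + n.-1)); rewrite vtx_prevS vtx_prevSS => -[e1 e2] //.
  by case: (@vtx_neqS i); apply: pt_eq.
case: (edges_alternate i) => -[e1 e2] //; by case: (@vtx_neqS i); apply: pt_eq.
Qed.

Lemma extreme_hedge_level i x : side_edge (min_y w) vs i \/ side_edge (max_y w) vs i ->
  edge vs i x -> x.2 = (vtx i).2.
Proof.
move=> hext /seg_between[_ hx]; have w0 := vtx_mem i; have w1 := vtx_mem i.+1.
by case: hext => -[_ [/(_ _ w1) ? /(_ _ w0) ?]]; case: hx => /andP[? ?]; lra.
Qed.

Lemma extreme_vedge_level i x : side_edge (min_x w) vs i \/ side_edge (max_x w) vs i ->
  edge vs i x -> x.1 = (vtx i).1.
Proof.
move=> hext /seg_between[hx _]; have w0 := vtx_mem i; have w1 := vtx_mem i.+1.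
by case: hext => -[_ [/(_ _ w1) ? /(_ _ w0) ?]]; case: hx => /andP[? ?]; lra.
Qed.

Lemma extreme_x_on_polygon a : w a -> min_x w a \/ max_x w a -> on_polygon vs a.
Proof.
move=> wa hx; case: hob => _ [_ [_ [_ [_ hbd]]]]; apply/hbd => e he.
split; first by exists a; split=> //; apply: ball_center.
have he2 : 0 < e / 2 by rewrite divr_gt0.
have inball d : d ^+ 2 < e ^+ 2 -> ball a e (a.1 + d, a.2).
  by rewrite /ball /= addrAC !subrr add0r [0 ^+ 2]expr2 mul0r addr0.
case: hx => hx; [exists (a.1 + - (e / 2), a.2) | exists (a.1 + e / 2, a.2)];
  (split; first by apply: inball; rewrite !expr2; nra); move/hx => /=; lra.
Qed.

Lemma extreme_point_vertex a : w a -> min_x w a \/ max_x w a ->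
  min_y w a \/ max_y w a -> exists k, a = vtx k.
Proof.
move=> wa hx hy; have [k _ hk] := extreme_x_on_polygon wa hx.
have w0 := vtx_mem k; have w1 := vtx_mem k.+1.
case: (edge_axis k) => e.
- move/(seg_ver _ e): hk => [ea /between_extremal hb].
  case: hb => [|eb|eb]; last 2 first.
  + by exists k; apply: pt_eq.
  + by exists k.+1; apply: pt_eq; rewrite // ea.
  by case: hy => h; [left | right]; split; apply: h.
- move/(seg_hor _ e): hk => [ea /between_extremal hb].
  case: hb => [|eb|eb]; last 2 first.
  + by exists k; apply: pt_eq.
  + by exists k.+1; apply: pt_eq; rewrite // ea.
  by case: hx => h; [left | right]; split; apply: h.
Qed.

Lemma vertex_corner k (Px Py : pt R -> Prop) :
  (forall v, v.1 = (vtx k).1 -> Px v) -> (forall v, v.2 = (vtx k).2 -> Py v) ->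
  corner_of (side_edge Py vs) (side_edge Px vs) vs (vtx k).
Proof.
move=> hPx hPy.
have prev_edge (P : pt R -> Prop) : P (vtx (k + n.-1)) -> P (vtx k) ->
    exists i, side_edge P vs i /\ endpoint_of vs i (vtx k).
  move=> h0 h1; exists ((k + n.-1) %% n)%N.
  rewrite /side_edge /endpoint_of vtx_modn vtx_modnS vtx_prevS ltn_pmod ?size_gt0 //.
  by split=> //; right.
have next_edge (P : pt R -> Prop) : P (vtx k) -> P (vtx k.+1) ->
    exists i, side_edge P vs i /\ endpoint_of vs i (vtx k).
  move=> h0 h1; exists (k %% n)%N.
  rewrite /side_edge /endpoint_of vtx_modn vtx_modnS ltn_pmod ?size_gt0 //.
  by split=> //; left.
case: (edges_alternate (k + n.-1)); rewrite vtx_prevS vtx_prevSS => -[e1 e2].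
- by split; [apply: prev_edge; apply: hPy | apply: next_edge; apply: hPx].
- by split; [apply: next_edge; apply: hPy | apply: prev_edge; apply: hPx].
Qed.

Lemma extreme_corner a (Px Py : pt R -> Prop) : w a ->
  Px = min_x w \/ Px = max_x w -> Py = min_y w \/ Py = max_y w ->
  (forall v, v.1 = a.1 -> Px v) -> (forall v, v.2 = a.2 -> Py v) ->
  corner_of (side_edge Py vs) (side_edge Px vs) vs a.
Proof.
move=> wa hPx hPy hx hy; have [k ek] : exists k, a = vtx k.
  apply: extreme_point_vertex => //.
    by case: hPx (hx a erefl) => ->; [left | right].
  by case: hPy (hy a erefl) => ->; [left | right].
by rewrite ek in hx hy *; exact: vertex_corner.
Qed.

Hypothesis hrc : rect_convex w.

Lemma hedge_level_approached i :
  side_edge (min_y w) vs i \/ side_edge (max_y w) vs i ->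
  forall eps, 0 < eps -> exists z, interior w z /\ `|z.2 - (vtx i).2| < eps.
Proof.
move=> hext; have e := esym (extreme_hedge_level hext (seg_end _ _)).
have [eu ev] := hedge_neighbours e.
have nu : (vtx i).2 != (vtx (i + n.-1)).2.
  by apply/eqP=> e2; case: (@vtx_neqS (i + n.-1)); rewrite vtx_prevS; apply: pt_eq.
have nv : (vtx i.+1).2 != (vtx i.+2).2.
  by apply/eqP=> e2; case: (@vtx_neqS i.+1); apply: pt_eq.
apply: (level_approached (rect_convex_hconvex hrc) e _ eu ev).
- by apply/eqP=> e1; case: (@vtx_neqS i); apply: pt_eq.
- by move=> x /seg_sym hx; apply: (@edge_mem (i + n.-1)); rewrite /edge vtx_prevS.
- exact: (@edge_mem i.+1).
case: hext => -[_ [h0 h1]]; [left | right]; split; rewrite lt_neqAle.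
- by rewrite nu (h0 _ (vtx_mem _)).
- by rewrite e nv (h1 _ (vtx_mem _)).
- by rewrite eq_sym nu (h0 _ (vtx_mem _)).
- by rewrite e eq_sym nv (h1 _ (vtx_mem _)).
Qed.

Lemma vedge_level_approached i :
  side_edge (min_x w) vs i \/ side_edge (max_x w) vs i ->
  forall eps, 0 < eps -> exists z, interior w z /\ `|z.1 - (vtx i).1| < eps.
Proof.
move=> hext eps heps; have e := esym (extreme_vedge_level hext (seg_end _ _)).
have [eu ev] := vedge_neighbours e.
have nu : (vtx i).1 != (vtx (i + n.-1)).1.
  by apply/eqP=> e2; case: (@vtx_neqS (i + n.-1)); rewrite vtx_prevS; apply: pt_eq.
have nv : (vtx i.+1).1 != (vtx i.+2).1.
  by apply/eqP=> e2; case: (@vtx_neqS i.+1); apply: pt_eq.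
have [||||z [iz hz]] := level_approached (rect_convex_hconvex (rect_convex_sw hrc))
  (u := sw (vtx i)) (v := sw (vtx i.+1)) (u' := sw (vtx (i + n.-1))) (v' := sw (vtx i.+2))
  e _ eu ev _ _ _ heps.
- by apply/eqP=> e1; case: (@vtx_neqS i); apply: pt_eq.
- apply: seg_sw_sub => x /seg_sym hx.
  by apply: (@edge_mem (i + n.-1)); rewrite /edge vtx_prevS.
- exact: seg_sw_sub (@edge_mem i.+1).
- case: hext => -[_ [h0 h1]]; [left | right]; split; rewrite /= lt_neqAle.
  + by rewrite nu (h0 _ (vtx_mem _)).
  + by rewrite e nv (h1 _ (vtx_mem _)).
  + by rewrite eq_sym nu (h0 _ (vtx_mem _)).
  + by rewrite e eq_sym nv (h1 _ (vtx_mem _)).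
by exists (sw z); rewrite -interior_sw swK.
Qed.

End Polygon.

Lemma joins_ends R (vs : seq (pt R)) (E1 E2 : nat -> Prop) s : joins E1 E2 vs s ->
  exists i j A B, [/\ E1 i, E2 j, edge vs i A, edge vs j B &
    forall x, seg s.1 s.2 x <-> seg A B x].
Proof.
case=> i [j [hi [hj [[hA hB] | [hA hB]]]]].
  by exists i, j, s.1, s.2.
by exists i, j, s.2, s.1; split=> // x; split; apply: seg_sym.
Qed.

Lemma seg_reaches_level R (w : region R) (f : pt R -> R) a b (y0 : R) :
  (forall x, seg a b x -> between (f a) (f x) (f b)) -> w a -> w b ->
  (forall q, w q -> y0 <= f q) \/ (forall q, w q -> f q <= y0) ->
  (forall e, 0 < e -> exists z, interior w z /\ `|f z - y0| < e) ->
  (forall z, interior w z -> exists2 x, seg a b x & f x = f z) ->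
  f a = y0 \/ f b = y0.
Proof.
move=> hf wa wb hside hnear hlev; apply: between_approaching_end.
  by case: hside => h; [left | right]; split; apply: h.
move=> e he; have [z [iz hz]] := hnear e he; have [x hx ex] := hlev z iz.
by exists (f x); [exact: hf | rewrite ex].
Qed.

Section CrossSkeleton.
Variable R : realType.
Variables (w : region R) (vs : seq (pt R)).
Hypotheses (hob : obstacle w vs) (hrect : rectilinear vs) (hrc : rect_convex w).

Lemma interior_exists : exists z, interior w z.
Proof. by case: hob => _ [_ [_ [_ []]]]. Qed.

Lemma obstacle_bounded : bounded w.
Proof. by case: hob => _ [_ [_ []]]. Qed.

Lemma opposite_corners_diagonal a b (x0 x1 y0 y1 : R) :
  (forall x, seg a b x -> w x) ->
  (forall q, w q -> x0 <= q.1 <= x1) -> (forall q, w q -> y0 <= q.2 <= y1) ->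
  a.1 = x0 -> b.1 = x1 -> (a.2 = y0 /\ b.2 = y1) \/ (a.2 = y1 /\ b.2 = y0) ->
  has_diagonal w vs.
Proof.
move=> hab hx hy ea eb hab2; exists a, b; split=> //.
have wa := hab _ (seg_start a b); have wb := hab _ (seg_end a b).
have minx v : v.1 = x0 -> min_x w v by move=> ev q /hx /andP[? ?]; rewrite ev.
have maxx v : v.1 = x1 -> max_x w v by move=> ev q /hx /andP[? ?]; rewrite ev.
have miny v : v.2 = y0 -> min_y w v by move=> ev q /hy /andP[? ?]; rewrite ev.
have maxy v : v.2 = y1 -> max_y w v by move=> ev q /hy /andP[? ?]; rewrite ev.
case: hab2 => -[ea2 eb2]; [left | right]; split;
  apply: (extreme_corner hob hrect) => //; first [by left | by right | move=> v ev];
  (apply: minx || apply: maxx || apply: miny || apply: maxy); by rewrite ev.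
Qed.

Lemma single_skeleton_levels s z : skeleton w [:: s] -> interior w z ->
  (exists2 x, seg s.1 s.2 x & x.2 = z.2) /\ (exists2 x, seg s.1 s.2 x & x.1 = z.1).
Proof.
move=> hS iz; have [[s' hs' hx] [s'' hs'' hy]] := skeleton_levels hS obstacle_bounded iz.
by move: hs' hs'' hx hy; rewrite !inE => /eqP -> /eqP -> hx hy.
Qed.

(* A single segment meeting every horizontal and every vertical line through
   an interior point must join two opposite extreme corners. *)
Lemma single_segment_diagonal s iB iT iL iR :
  bottom_edge w vs iB -> top_edge w vs iT -> left_edge w vs iL -> right_edge w vs iR ->
  skeleton w [:: s] -> has_diagonal w vs.
Proof.
move=> hB hT hL hR hS; have lev := single_skeleton_levels hS.
have hin : forall x, seg s.1 s.2 x -> w x by case: hS => _ [hi _]; apply: hi; rewrite inE.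
have hin' x : seg s.2 s.1 x -> w x by move/seg_sym; apply: hin.
have ws1 := hin _ (seg_start _ _); have ws2 := hin _ (seg_end _ _).
have [_ [hY0 _]] := hB; have [_ [hY1 _]] := hT; have [_ [hX0 _]] := hL; have [_ [hX1 _]] := hR.
have hy2 x : seg s.1 s.2 x -> between s.1.2 x.2 s.2.2 by move/seg_between=> [].
have hx1 x : seg s.1 s.2 x -> between s.1.1 x.1 s.2.1 by move/seg_between=> [].
have hbY0 : s.1.2 = (vtx vs iB).2 \/ s.2.2 = (vtx vs iB).2.
  apply: (seg_reaches_level (f := snd) hy2 ws1 ws2 (or_introl hY0)); last by move=> z /lev[].
  exact: (hedge_level_approached hob hrect hrc (or_introl hB)).
have hbY1 : s.1.2 = (vtx vs iT).2 \/ s.2.2 = (vtx vs iT).2.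
  apply: (seg_reaches_level (f := snd) hy2 ws1 ws2 (or_intror hY1)); last by move=> z /lev[].
  exact: (hedge_level_approached hob hrect hrc (or_intror hT)).
have hbX0 : s.1.1 = (vtx vs iL).1 \/ s.2.1 = (vtx vs iL).1.
  apply: (seg_reaches_level (f := fst) hx1 ws1 ws2 (or_introl hX0)); last by move=> z /lev[].
  exact: (vedge_level_approached hob hrect hrc (or_introl hL)).
have hbX1 : s.1.1 = (vtx vs iR).1 \/ s.2.1 = (vtx vs iR).1.
  apply: (seg_reaches_level (f := fst) hx1 ws1 ws2 (or_intror hX1)); last by move=> z /lev[].
  exact: (vedge_level_approached hob hrect hrc (or_intror hR)).
have hx q : w q -> (vtx vs iL).1 <= q.1 <= (vtx vs iR).1 by move=> wq; rewrite hX0 ?hX1.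
have hy q : w q -> (vtx vs iB).2 <= q.2 <= (vtx vs iT).2 by move=> wq; rewrite hY0 ?hY1.
have [z0 iz0] := interior_exists.
have /andP[? ?] := interior_strict_bounds hy iz0.
have /andP[? ?] := interior_strict_xbounds hx iz0.
case: hbY0 => ?; case: hbY1 => ?; try lra; case: hbX0 => ?; case: hbX1 => ?; try lra.
all: by [ apply: (opposite_corners_diagonal hin hx hy) => //; (left + right); split
        | apply: (opposite_corners_diagonal hin' hx hy) => //; (left + right); split ].
Qed.

Lemma cross_config_of_cross sH sV : is_cross w vs sH sV ->
  exists A B C D, [/\ cross_config w A B C D,
    forall x, seg sH.1 sH.2 x <-> seg A B x & forall x, seg sV.1 sV.2 x <-> seg C D x].
Proof.
case=> wH [wV [jH jV]].
have [iB [iT [A [B [hiB hiT hA hB eH]]]]] := joins_ends jH.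
have [iL [iR [C [D [hiL hiR hC hD eV]]]]] := joins_ends jV.
have eA := extreme_hedge_level hob (or_introl hiB) hA.
have eB := extreme_hedge_level hob (or_intror hiT) hB.
have eC := extreme_vedge_level hob (or_introl hiL) hC.
have eD := extreme_vedge_level hob (or_intror hiR) hD.
have [_ [hY0 _]] := hiB; have [_ [hY1 _]] := hiT.
have [_ [hX0 _]] := hiL; have [_ [hX1 _]] := hiR.
have hy q : w q -> A.2 <= q.2 <= B.2 by move=> wq; rewrite eA eB hY0 ?hY1.
have hx q : w q -> C.1 <= q.1 <= D.1 by move=> wq; rewrite eC eD hX0 ?hX1.
have [z0 iz0] := interior_exists.
have /andP[? ?] := interior_strict_bounds hy iz0.
have /andP[? ?] := interior_strict_xbounds hx iz0.
exists A, B, C, D; split=> //; split=> //.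
- exact: rect_convex_hconvex.
- exact: rect_convex_hconvex (rect_convex_sw hrc).
- by move=> x /eH /wH.
- by move=> x /eV /wV.
- lra.
- lra.
Qed.

Lemma cross_is_skeleton sH sV : is_cross w vs sH sV -> skeleton w [:: sH; sV].
Proof.
move=> hX; have [A [B [C [D [hcc eH eV]]]]] := cross_config_of_cross hX.
case: hX => wH [wV _]; split; [|split].
- move=> s; rewrite !inE => /orP[] /eqP -> e.
    have := (eH A).2 (seg_start A B); have := (eH B).2 (seg_end A B).
    by rewrite e => /seg_same eB /seg_same eA; have := cc_AB_lt hcc; rewrite eA eB ltxx.
  have := (eV C).2 (seg_start C D); have := (eV D).2 (seg_end C D).
  by rewrite e => /seg_same eD /seg_same eC; have := cc_CD_lt hcc; rewrite eC eD ltxx.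
- by move=> s; rewrite !inE => /orP[] /eqP ->.
move=> p q np nq hblk c hc.
have [z [hz iz]] := hblk _ (one_corner_path_lpath (or_introl erefl)).
have [z' [hz' iz']] := hblk _ (one_corner_path_lpath (or_intror erefl)).
move/oc_trace_lpath in hz; move/oc_trace_lpath_rev in hz'.
have [x hx hcross] : exists2 x, oc_trace p q c x & seg A B x \/ seg C D x.
  case: (one_corner_trace hc) => htr.
    have [x ? ?] := cross_meets_lpath hcc np nq (ex_intro2 _ _ z hz iz) (ex_intro2 _ _ z' hz' iz').
    by exists x; first exact: htr.
  have [x ? ?] := cross_meets_lpath hcc nq np (ex_intro2 _ _ z' hz' iz') (ex_intro2 _ _ z hz iz).
  by exists x; first exact: htr.
case: hcross => h; [exists sH | exists sV]; rewrite !inE eqxx ?orbT; split=> //;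
  by exists x; split=> //; first [exact/eH | exact/eV].
Qed.

Lemma skeleton_size_ge2 iB iT iL iR S :
  bottom_edge w vs iB -> top_edge w vs iT -> left_edge w vs iL -> right_edge w vs iR ->
  ~ has_diagonal w vs -> skeleton w S -> (2 <= size S)%N.
Proof.
move=> hB hT hL hR hnd; case: S => [|s [|s' t]] hS //.
  have [z0 iz0] := interior_exists.
  by have [[s hs _] _] := skeleton_levels hS obstacle_bounded iz0; rewrite in_nil in hs.
by case: hnd; apply: (single_segment_diagonal hB hT hL hR hS).
Qed.

End CrossSkeleton.

Theorem lemma6 (R : realType) (w : region R) (vs : seq (pt R)) :
  obstacle w vs -> rectilinear vs -> rect_convex w -> ~ has_diagonal w vs ->
  forall sH sV : pt R * pt R, is_cross w vs sH sV ->
    min_skeleton w [:: sH; sV].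
Proof.
move=> hob hrect hrc hnd sH sV hX; split; first exact: cross_is_skeleton hX.
case: (hX) => _ [_ [jH jV]].
have [iB [iT [_ [_ [hiB hiT _ _ _]]]]] := joins_ends jH.
have [iL [iR [_ [_ [hiL hiR _ _ _]]]]] := joins_ends jV.
by move=> S; apply: (skeleton_size_ge2 hob hrect hrc hiB hiT hiL hiR hnd).
Qed.
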